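(* In the Setting below, for each $i$ the digraph $O_i$ is an out-tree rooted at $r$, and every vertex of $O_i$ with positive out-degree has out-degree at least two.
   Context: A test $T$ on $[n]$ separates $i\neq j$ if $|\{i,j\}\cap T|=1$. The classes induced by a collection $\mathcal{T}'$ of tests are the equivalence classes of the relation ''$i,j$ are not separated by any test of $\mathcal{T}'$''. Setting: $\mathcal{T}$ is a collection of distinct tests on $[n]$ that is a test cover and contains every singleton $\{x\}$, $x\in[n]$; $\mathcal{F}\subseteq\mathcal{T}$ has the property that for every $T\in\mathcal{T}\setminus\mathcal{F}$, $\mathcal{F}\cup\{T\}$ induces at most one more class than $\mathcal{F}$, and for every two $T,T'\in\mathcal{T}\setminus\mathcal{F}$, $\mathcal{F}\cup\{T,T'\}$ induces at most two more classes than $\mathcal{F}$. Let $C_1,\dots,C_l$ be the classes induced by $\mathcal{F}$. For $C\subseteq[n]$, a test $S\in\mathcal{T}$ is a $C$-test if $S\cap C\neq\emptyset$ and $C\setminus S\neq\emptyset$; $L(S)=S\cap C$. Every $C_i$-test $S$ satisfies $|S\cap C_i|\le|C_i|/2$. The digraph $O_i$ has a root vertex $r$ with $S_r=C_i$, and one further vertex $v$ for each distinct set $S_v\subseteq C_i$ such that $S_v=L(S)$ for some $C_i$-test $S\in\mathcal{T}$; there is an arc from $v$ to $w$ iff $S_w\subsetneq S_v$ and there is no vertex $u$ with $S_w\subsetneq S_u\subsetneq S_v$. An out-tree is an orientation of a tree with exactly one vertex of in-degree zero (the root). *)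

From mathcomp Require Import all_boot.
Set Implicit Arguments. Unset Strict Implicit. Unset Printing Implicit Defensive.

Section TestCovers.
Variable n : nat.
Notation test := {set 'I_n}.

Definition separates (T : test) (i j : 'I_n) : bool := (i \in T) != (j \in T).

Definition test_cover (TT : {set test}) : Prop :=
  forall i j : 'I_n, i != j -> exists2 T, T \in TT & separates T i j.

Definition unsep (F : {set test}) (i j : 'I_n) : bool :=
  [forall T in F, ~~ separates T i j].

Definition classes (F : {set test}) : {set test} :=
  [set [set j | unsep F i j] | i : 'I_n].

Definition C_test (C S : test) : bool := (S :&: C != set0) && (C :\: S != set0).

Definition O_vertices (TT : {set test}) (C : test) : {set test} :=
  C |: [set S :&: C | S in [set S in TT | C_test C S]].

Definition O_arc (TT : {set test}) (C : test) (v w : test) : bool :=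
  [&& v \in O_vertices TT C, w \in O_vertices TT C, w \proper v &
      ~~ [exists u in O_vertices TT C, (w \proper u) && (u \proper v)]].
End TestCovers.

Section Digraphs.
Variable V : finType.

Definition indeg (D : {set V}) (a : rel V) (v : V) : nat := #|[set u in D | a u v]|.
Definition outdeg (D : {set V}) (a : rel V) (v : V) : nat := #|[set w in D | a v w]|.

Definition underlying (D : {set V}) (a : rel V) : rel V :=
  fun x y => [&& x \in D, y \in D & a x y || a y x].

Definition is_tree (D : {set V}) (e : rel V) : Prop :=
  (forall x y, x \in D -> y \in D -> connect e x y) /\
  (forall c : seq V, all (mem D) c -> 3 <= size c -> ~ ucycle e c).

Definition oriented_tree (D : {set V}) (a : rel V) : Prop :=
  [/\ forall x y, a x y -> (x \in D) && (y \in D),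
      forall x, ~~ a x x,
      forall x y, a x y -> ~~ a y x &
      is_tree D (underlying D a)].

Definition out_tree (D : {set V}) (a : rel V) (r : V) : Prop :=
  [/\ oriented_tree D a, r \in D, indeg D a r = 0 &
      forall v, v \in D -> indeg D a v = 0 -> v = r].
End Digraphs.

From mathcomp Require Import all_boot.
From mathcomp Require Import zify.
Set Implicit Arguments. Unset Strict Implicit. Unset Printing Implicit Defensive.

(* Each digraph O_C is the Hasse diagram (covering relation) of the family of
   sets D = {C} ∪ {S ∩ C | S a C-test}.  The proof has three layers:
   1. a digraph in which arcs strictly decrease a measure, every vertex but r
      has exactly one in-neighbour and r has none, is an out-tree rooted at r
      (walk up through parents to reach r; the minimum of a cycle would need
      two parents);
   2. the Hasse diagram of a laminar family of nonempty subsets of a top set C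
      containing C is such a digraph (measure = cardinality); if moreover all
      singletons of a vertex v are in the family, a non-leaf v has at least two
      children (a child w misses some x of v, and the child above {x} is new);
   3. for a class C of F, the family D is laminar: two crossing traces S ∩ C,
      S' ∩ C that meet leave, by the halving hypothesis, a point of C outside
      both, so S, S' split C into four classes, against the hypothesis that
      adding two tests creates at most two new classes.  Singletons are tests,
      so they are vertices of O_C as soon as |C| >= 2. *)

Section OutTreeFromParents.
Variables (V : finType) (D : {set V}) (a : rel V) (r : V) (mu : V -> nat).
Hypothesis arc_in : forall x y, a x y -> (x \in D) && (y \in D).
Hypothesis arc_dec : forall x y, a x y -> mu y < mu x.
Hypothesis parent_unique : forall x1 x2 y, a x1 y -> a x2 y -> x1 = x2.
Hypothesis root_in : r \in D.
Hypothesis root_orphan : forall x, ~~ a x r.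
Hypothesis parent_exists : forall v, v \in D -> v != r -> exists p, a p v.

Local Notation e := (underlying D a).

Lemma underlying_sym : symmetric e.
Proof. by move=> x y; rewrite /underlying andbCA orbC. Qed.

(* Following parents increases mu, which is bounded on D, so r is reached. *)
Lemma connect_root v : v \in D -> connect e v r.
Proof.
pose bound := \max_(x in D) mu x.
move=> vD; have [k lt] := ubnP (bound - mu v); elim: k v vD lt => // k IH v vD lt.
have [-> | vr] := eqVneq v r; first exact: connect0.
have [p pv] := parent_exists vD vr.
have /andP[pD _] := arc_in pv.
apply: connect_trans (connect1 _) (IH p pD _); first by rewrite /underlying vD pD pv orbT.
by have := arc_dec pv; have := leq_bigmax_cond (F := mu) _ pD; rewrite -/bound; lia.
Qed.

(* In a cycle, both neighbours of a vertex of minimal measure are parents of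
   it; they are distinct, contradicting the uniqueness of parents. *)
Lemma underlying_acyclic c : 3 <= size c -> ~ ucycle e c.
Proof.
case: c => [//|c0 c'] sz /andP[cyc uniq_c].
have [m mc min_m] := arg_minnP mu (mem_head c0 c').
have to_parent z : z \in c0 :: c' -> e m z -> a z m.
  move=> zc /and3P[_ _] /orP[] // /arc_dec lt_mz.
  by have := min_m z zc; rewrite leqNgt lt_mz.
have [i s rot_c] := rot_to mc.
have in_c z : z \in s -> z \in c0 :: c' by move=> zs; rewrite -(mem_rot i) rot_c inE zs orbT.
move: cyc uniq_c sz; rewrite -(rot_cycle i) -(rot_uniq i) -(size_rot i) rot_c.
case: s rot_c in_c => [//|a1 s1] _ in_c.
case/lastP: s1 in_c => [//|s2 b] in_c.
rewrite /cycle rcons_path last_cons last_rcons underlying_sym => /andP[/andP[ema _] emb].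
rewrite /= mem_rcons inE negb_or => /andP[_ /andP[/andP[a1b _] _]] _.
have pa := to_parent a1 (in_c a1 (mem_head _ _)) ema.
have b_in : b \in a1 :: rcons s2 b by rewrite inE mem_rcons mem_head orbT.
have pb := to_parent b (in_c b b_in) emb.
by move: a1b; rewrite (parent_unique pa pb) eqxx.
Qed.

Lemma out_tree_of_parents : out_tree D a r.
Proof.
split=> //.
- split=> //.
  + by move=> x; apply/negP => /arc_dec; rewrite ltnn.
  + by move=> x y /arc_dec lt_yx; apply/negP => /arc_dec; rewrite ltnNge (ltnW lt_yx).
  + split=> [x y xD yD | c _]; last exact: underlying_acyclic.
    apply: connect_trans (connect_root xD) _.
    by rewrite (sym_connect_sym underlying_sym) connect_root.
- by apply: eq_card0 => x; rewrite inE (negbTE (root_orphan x)) andbF.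
- move=> v vD; have [// | vr] := eqVneq v r.
  have [p pv] := parent_exists vD vr; have /andP[pD _] := arc_in pv.
  by move/card0_eq/(_ p); rewrite inE pD pv.
Qed.
End OutTreeFromParents.

Section HasseDiagram.
Variables (T : finType) (D : {set {set T}}) (top : {set T}).

Definition hasse (v w : {set T}) : bool :=
  [&& v \in D, w \in D, w \proper v &
      ~~ [exists u in D, (w \proper u) && (u \proper v)]].

Lemma hasse_in v w : hasse v w -> (v \in D) && (w \in D).
Proof. by case/and4P => -> ->. Qed.

Lemma hasse_proper v w : hasse v w -> w \proper v.
Proof. by case/and4P. Qed.

(* below v, every member of D lies in some child of v: take a largest one *)
Lemma hasse_below v w :
  v \in D -> w \in D -> w \proper v -> exists2 u, hasse v u & w \subset u.
Proof.
move=> vD wD wv.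
pose P u := [&& u \in D, w \subset u & u \proper v].
have Pw : P w by rewrite /P wD subxx wv.
have [u /and3P[uD wu uv] max_u] := arg_maxnP (fun u : {set T} => #|u|) Pw.
exists u => //; rewrite /hasse vD uD uv /=.
apply/exists_inP => -[z zD /andP[uz zv]].
have := max_u z; rewrite /P zD (subset_trans wu (proper_sub uz)) zv => /(_ isT).
by apply/negP; rewrite -ltnNge proper_card.
Qed.

Hypothesis top_in : top \in D.
Hypothesis sub_top : forall v, v \in D -> v \subset top.
Hypothesis nonempty : forall v, v \in D -> v != set0.
Hypothesis laminar : forall u v, u \in D -> v \in D ->
  u :&: v != set0 -> (u \subset v) || (v \subset u).

(* every member other than top has a parent: a smallest member above it *)
Lemma hasse_above v : v \in D -> v != top -> exists p, hasse p v.
Proof.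
move=> vD vtop.
pose P u := (u \in D) && (v \proper u).
have Ptop : P top by rewrite /P top_in properEneq vtop sub_top.
have [u /andP[uD vu] min_u] := arg_minnP (fun u : {set T} => #|u|) Ptop.
exists u; rewrite /hasse uD vD vu /=.
apply/exists_inP => -[z zD /andP[vz zu]].
by have := min_u z; rewrite /P zD vz => /(_ isT); rewrite leqNgt proper_card.
Qed.

(* two parents of m both contain m, hence meet, hence are nested: then one
   of them would lie strictly between m and the other *)
Lemma hasse_parent_unique p1 p2 m : hasse p1 m -> hasse p2 m -> p1 = p2.
Proof.
move=> /and4P[p1D mD m1 no1] /and4P[p2D _ m2 no2].
have meet : p1 :&: p2 != set0.
  case/set0Pn: (nonempty mD) => x xm; apply/set0Pn; exists x.
  by rewrite inE (subsetP (proper_sub m1)) ?(subsetP (proper_sub m2)).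
have [// | ne12] := eqVneq p1 p2.
case/orP: (laminar p1D p2D meet) => sub.
  by case/negP: no2; apply/exists_inP; exists p1; rewrite // m1 properEneq ne12.
by case/negP: no1; apply/exists_inP; exists p2; rewrite // m2 properEneq eq_sym ne12.
Qed.

Lemma hasse_out_tree : out_tree D hasse top.
Proof.
apply: (@out_tree_of_parents _ D hasse top (fun v => #|v|)) => //.
- exact: hasse_in.
- by move=> x y /hasse_proper/proper_card.
- exact: hasse_parent_unique.
- move=> x; apply/negP => xtop; have /andP[xD _] := hasse_in xtop.
  by have := proper_sub_trans (hasse_proper xtop) (sub_top xD); rewrite properxx.
- exact: hasse_above.
Qed.

(* a child w of v misses a point x of v; the child above {x} differs from w *)
Lemma hasse_branching v w :
  hasse v w -> (forall x, x \in v -> [set x] \in D) -> 2 <= outdeg D hasse v.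
Proof.
move=> vw singles; have /andP[vD wD] := hasse_in vw.
have [_ [x xv xw]] := properP (hasse_proper vw).
case/set0Pn: (nonempty wD) => y yw.
have x_v : [set x] \proper v.
  rewrite properEneq sub1set xv andbT; apply/eqP => vx.
  have := subsetP (proper_sub (hasse_proper vw)) y yw.
  by rewrite -vx inE => /eqP yx; rewrite -yx yw in xw.
have [u vu xu] := hasse_below vD (singles x xv) x_v.
have /andP[_ uD] := hasse_in vu.
have wu : w != u by apply: contraNneq xw => ->; rewrite -sub1set.
have : [set w; u] \subset [set z in D | hasse v z].
  by apply/subsetP => z /set2P[] ->; rewrite inE ?wD ?uD.
by move/subset_leq_card; rewrite cards2 wu.
Qed.
End HasseDiagram.

Section Classes.
Variable n : nat.
Implicit Types (F G TT : {set {set 'I_n}}) (C S : {set 'I_n}).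

Lemma unsep_refl F i : unsep F i i.
Proof. by apply/forall_inP => T _; rewrite /separates eqxx. Qed.

Lemma unsep_mem F T i j : T \in F -> unsep F i j -> (i \in T) = (j \in T).
Proof. by move=> TF /forall_inP /(_ T TF); rewrite /separates negbK => /eqP. Qed.

Lemma unsep_trans F i j k : unsep F i j -> unsep F j k -> unsep F i k.
Proof.
move=> ij jk; apply/forall_inP => T TF.
by rewrite /separates negbK (unsep_mem TF ij) (unsep_mem TF jk).
Qed.

Lemma unsep_sym F i j : unsep F i j -> unsep F j i.
Proof. by move=> /forall_inP ij; apply/forall_inP => T /ij; rewrite /separates eq_sym. Qed.

Lemma unsep_sub F G i j : F \subset G -> unsep G i j -> unsep F i j.
Proof. by move=> /subsetP sFG /forall_inP ij; apply/forall_inP => T /sFG /ij. Qed.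

Definition cl F i : {set 'I_n} := [set j | unsep F i j].

Lemma cl_refl F i : i \in cl F i.
Proof. by rewrite inE unsep_refl. Qed.

Lemma class_of F C x : C \in classes F -> x \in C -> C = cl F x.
Proof.
case/imsetP => i _ ->; rewrite inE => ix; apply/setP => y; rewrite !inE.
apply/idP/idP => [iy | xy]; last exact: unsep_trans ix xy.
exact: unsep_trans (unsep_sym ix) iy.
Qed.

(* refining F to G: each G-class inside the F-class C counts separately,
   while every other F-class still contains at least one G-class (the map
   g sends a G-class to the F-class containing it) *)
Lemma classes_refine F G C : F \subset G -> C \in classes F ->
  #|classes F| + #|[set cl G x | x in C]| <= #|classes G| + 1.
Proof.
move=> sFG HC.
pose g (K : {set 'I_n}) := [set j | [exists i in K, unsep F i j]].
have g_cl i : g (cl G i) = cl F i.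
  apply/setP => j; rewrite !inE; apply/existsP/idP => [[k /andP[]] | ij].
    by rewrite inE => /(unsep_sub sFG) ik kj; apply: unsep_trans ik kj.
  by exists i; rewrite cl_refl.
set B := [set K in classes G | g K == C].
have outside : #|classes F :\ C| <= #|classes G :\: B|.
  apply: leq_trans (leq_imset_card g _); apply: subset_leq_card.
  apply/subsetP => K; rewrite !inE => /andP[KC /imsetP[i _ Ki]].
  apply/imsetP; exists (cl G i); last by rewrite g_cl /cl Ki.
  by rewrite !inE imset_f // g_cl /cl -Ki (negbTE KC).
have inside : #|[set cl G x | x in C]| <= #|classes G :&: B|.
  apply: subset_leq_card; apply/subsetP => K /imsetP[x xC ->].
  by rewrite !inE imset_f //= g_cl -(class_of HC xC).
rewrite (cardsD1 C (classes F)) HC -(cardsID B (classes G)) add1n addnC.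
by rewrite addn1 addnS ltnS leq_add.
Qed.

Lemma invariant_bound G C (R : finType) (f : 'I_n -> R) :
  (forall x y, unsep G x y -> f x = f y) ->
  #|f @: C| <= #|[set cl G x | x in C]|.
Proof.
move=> f_inv; case: (set_0Vmem C) => [-> | [x0 _]]; first by rewrite imset0 cards0.
pose h (K : {set 'I_n}) := f (odflt x0 [pick y in K]).
apply: leq_trans _ (leq_imset_card h [set cl G x | x in C]).
apply: subset_leq_card; apply/subsetP => _ /imsetP[x xC ->].
apply/imsetP; exists (cl G x); first exact: imset_f.
rewrite /h; case: pickP => [y | /(_ x)]; last by rewrite cl_refl.
by rewrite inE => /f_inv.
Qed.

Lemma four_patterns F C S S' : C \in classes F ->
  (forall s : bool * bool, exists2 x, x \in C & (x \in S, x \in S') = s) ->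
  #|classes F| + 3 <= #|classes (S |: (S' |: F))|.
Proof.
move=> HC patterns; set G := S |: (S' |: F).
have sFG : F \subset G by apply/subsetP => T TF; rewrite !inE TF !orbT.
pose pattern x := (x \in S, x \in S').
have pattern_inv x y : unsep G x y -> pattern x = pattern y.
  move=> xy; have memG T : T \in G -> (x \in T) = (y \in T) by move/unsep_mem; apply.
  by rewrite /pattern (memG S) ?(memG S') // !inE eqxx ?orbT.
have all_patterns : pattern @: C = setT.
  by apply/setP => s; rewrite inE; have [x xC <-] := patterns s; apply: imset_f.
have := classes_refine sFG HC; have := invariant_bound C pattern_inv.
by rewrite all_patterns cardsT card_prod card_bool; lia.
Qed.

(* a C-test splits the class C, so it cannot belong to F *)
Lemma C_test_notin F C S : C \in classes F -> C_test C S -> S \notin F.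
Proof.
move=> HC /andP[/set0Pn[y /setIP[yS yC]] /set0Pn[z /setDP[zC zS]]].
apply: contra zS => SF; rewrite -(unsep_mem SF (_ : unsep F y z)) //.
by rewrite -[unsep _ _ _]inE -/(cl F y) -(class_of HC yC).
Qed.

(* inclusion-exclusion: two meeting subsets (sizes p, q, intersection i,
   union k) of a t-set, each of size at most t/2, do not cover it *)
Lemma halves_overlap p q i k t :
  2 * p <= t -> 2 * q <= t -> k + i = p + q -> 0 < i -> k < t.
Proof. lia. Qed.

Lemma traces_laminar TT F C S S' :
  (forall T T', T \in TT :\: F -> T' \in TT :\: F ->
     #|classes (T |: (T' |: F))| <= #|classes F| + 2) ->
  C \in classes F -> S \in TT -> S' \in TT -> C_test C S -> C_test C S' ->
  2 * #|S :&: C| <= #|C| -> 2 * #|S' :&: C| <= #|C| ->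
  (S :&: C) :&: (S' :&: C) != set0 ->
  (S :&: C \subset S' :&: C) || (S' :&: C \subset S :&: C).
Proof.
move=> H2 HC STT S'TT SC S'C half half' meet.
apply/negPn/negP => /norP[/subsetPn[b /setIP[bS bC] bS'] /subsetPn[c /setIP[cS' cC] cS]].
rewrite !inE bC cC !andbT in bS' cS.
case/set0Pn: (meet) => x; rewrite !inE => /andP[/andP[xS xC] /andP[xS' _]].
have [d dC] : exists2 d, d \in C & d \notin (S :&: C) :|: (S' :&: C).
  apply/subsetPn/negP => /subset_leq_card; apply/negP; rewrite -ltnNge.
  by apply: halves_overlap half half' (cardsUI _ _) _; rewrite card_gt0.
rewrite !inE dC !andbT negb_or => /andP[dS dS'].
have four : #|classes F| + 3 <= #|classes (S |: (S' |: F))|.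
  apply: (four_patterns HC) => -[[] []].
  - by exists x; rewrite ?xS ?xS'.
  - by exists b; rewrite ?bS ?(negbTE bS').
  - by exists c; rewrite ?cS' ?(negbTE cS).
  - by exists d; rewrite ?(negbTE dS) ?(negbTE dS').
have := H2 S S'; rewrite !inE STT S'TT (C_test_notin HC SC) (C_test_notin HC S'C).
by move=> /(_ isT isT) /(leq_trans four); rewrite leq_add2l.
Qed.

Lemma O_vertexP TT C v : v \in O_vertices TT C ->
  v = C \/ exists2 S, S \in TT & C_test C S /\ v = S :&: C.
Proof.
rewrite !inE => /predU1P[-> | /imsetP[S]]; first by left.
by rewrite inE => /andP[STT SC] ->; right; exists S.
Qed.

Lemma O_root TT C : C \in O_vertices TT C.
Proof. exact: setU11. Qed.

Lemma O_vertex_sub TT C v : v \in O_vertices TT C -> v \subset C.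
Proof. by case/O_vertexP => [-> | [S _ [_ ->]]]; [exact: subxx | exact: subsetIr]. Qed.

Lemma O_vertex_nonempty TT F C v :
  C \in classes F -> v \in O_vertices TT C -> v != set0.
Proof.
move=> HC /O_vertexP[-> | [S _ [/andP[meet _] ->]]] //.
by case/imsetP: HC => i _ ->; apply/set0Pn; exists i; apply: cl_refl.
Qed.

Lemma O_singleton TT C x :
  [set x] \in TT -> 1 < #|C| -> x \in C -> [set x] \in O_vertices TT C.
Proof.
move=> xTT C2 xC; rewrite (cardsD1 x) xC add1n ltnS card_gt0 in C2.
case/set0Pn: C2 => y /setD1P[yx yC].
apply/setU1P; right; apply/imsetP; exists [set x]; last first.
  by apply/esym/setIidPl; rewrite sub1set.
rewrite inE xTT /C_test /=; apply/andP; split; apply/set0Pn.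
  by exists x; rewrite !inE eqxx.
by exists y; rewrite !inE yC yx.
Qed.

Lemma O_laminar TT F C :
  (forall T T', T \in TT :\: F -> T' \in TT :\: F ->
     #|classes (T |: (T' |: F))| <= #|classes F| + 2) ->
  (forall S, S \in TT -> C_test C S -> 2 * #|S :&: C| <= #|C|) ->
  C \in classes F -> forall u v, u \in O_vertices TT C -> v \in O_vertices TT C ->
  u :&: v != set0 -> (u \subset v) || (v \subset u).
Proof.
move=> H2 half HC u v /O_vertexP[-> | [S STT [SC ->]]] /O_vertexP[-> | [S' S'TT [S'C ->]]] meet.
- by rewrite subxx.
- by rewrite subsetIr orbT.
- by rewrite subsetIr.
- exact: (traces_laminar H2 HC STT S'TT SC S'C (half S STT SC) (half S' S'TT S'C) meet).
Qed.
End Classes.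

Theorem mainTheorem11 (n : nat) (TT F : {set {set 'I_n}})
  (Hcover : test_cover TT)
  (Hsing : forall x : 'I_n, [set x] \in TT)
  (HF : F \subset TT)
  (H1 : forall T, T \in TT :\: F ->
          #|classes (T |: F)| <= #|classes F| + 1)
  (H2 : forall T T', T \in TT :\: F -> T' \in TT :\: F ->
          #|classes (T |: (T' |: F))| <= #|classes F| + 2)
  (Hhalf : forall C, C \in classes F -> forall S, S \in TT -> C_test C S ->
          2 * #|S :&: C| <= #|C|) :
  forall C, C \in classes F ->
    out_tree (O_vertices TT C) (O_arc TT C) C /\
    (forall v, v \in O_vertices TT C -> 0 < outdeg (O_vertices TT C) (O_arc TT C) v ->
       2 <= outdeg (O_vertices TT C) (O_arc TT C) v).
Proof.
move=> C HC; set D := O_vertices TT C.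
have nonempty v : v \in D -> v != set0 := O_vertex_nonempty HC.
have laminar := O_laminar H2 (Hhalf C HC) HC.
split; first exact: hasse_out_tree (O_root TT C) (@O_vertex_sub _ TT C) nonempty laminar.
move=> v vD; rewrite /outdeg card_gt0 => /set0Pn[w]; rewrite inE => /andP[wD vw].
apply: (hasse_branching nonempty vw) => x xv.
apply: O_singleton (Hsing x) _ (subsetP (O_vertex_sub vD) x xv).
(* C has two points: it contains v, which strictly contains the nonempty w *)
apply: leq_ltn_trans (_ : 0 < #|w|) _; first by rewrite card_gt0 nonempty.
exact: leq_trans (proper_card (hasse_proper vw)) (subset_leq_card (O_vertex_sub vD)).
Qed.
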